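(* Let $0<3x_0<L$, $\gamma=\gamma(x_0,L)$, $\lambda=\lambda(x_0,L)=\frac{2L}{L+x_0}$, and let $\mathcal V$ be an admissible variation of $\gamma$, with $\varphi,\psi$ defined by $X=\varphi N+\varphi_\tau\dot\gamma$, $X'=\psi N+\psi_\tau\dot\gamma$. Then $$\left.\frac{d^2(\mathcal F-\lambda\mathcal A)(\mathcal V(\cdot,t))}{dt^2}\right|_{t=0}=\int_0^{2L}\Big((2-\lambda)H\varphi^2-\frac{2\dot\varphi^2}{H}+\frac{2\ddot\varphi^2}{H^3}\Big)ds+\Big[\frac{\dot\psi}{H^2}\Big]_0^{2L}\ \ge\ \int_0^{2L}\Big((2-\lambda)H\varphi^2-\frac{2\dot\varphi^2}{H}+\frac{2\ddot\varphi^2}{H^3}\Big)ds.$$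
   Context: Notation: $(\xi,\eta)^\perp=(\eta,-\xi)$; for a regular curve $\gamma\in C^2([0,2L],\mathbb R^2)$, curvature $H=\langle\dot\gamma,\ddot\gamma^\perp\rangle/|\dot\gamma|^3$, normal $N=\dot\gamma^\perp/|\dot\gamma|$; strictly counterclockwise means $H>0$. A curve $\gamma=(x,y)$ is admissible if $\gamma\in C^\infty([0,2L],\mathbb R^2)$ is regular, strictly counterclockwise, injective, $\gamma(0)=(x_0,0)$, $\gamma(2L)=(-x_0,0)$, $y>0$ on $(0,2L)$. $\mathcal A(\gamma)=\frac12\int_0^{2L}(x\dot y-\dot xy)ds$, $\mathcal F(\gamma)=\int_0^{2L}|\dot\gamma|H^{-1}ds$. An admissible variation is a smooth $\mathcal V:[0,2L]\times[-t_{\mathcal V},t_{\mathcal V}]\to\mathbb R^2$ with $\mathcal V(\cdot,0)=\gamma$ and every $\mathcal V(\cdot,t)$ admissible; $X=\partial_t\mathcal V|_{t=0}$, $X'=\partial_t^2\mathcal V|_{t=0}$. For $0<3x_0<L$: with $\sigma=\pi\sqrt{x_0/(L+x_0)}$, $k=L/\sin\sigma$, $a(s)=\arcsin((s-L)/k)$, $\gamma(x_0,L)=(x,y)$ on $[0,2L]$ with $x(s)=-\frac k2\big(\frac{\sigma}{\pi+\sigma}\sin(\tfrac{\pi+\sigma}{\sigma}a(s))+\frac{\sigma}{\pi-\sigma}\sin(\tfrac{\pi-\sigma}{\sigma}a(s))\big)$, $y(s)=\frac k2\big(\frac{\sigma}{\pi+\sigma}\cos(\tfrac{\pi+\sigma}{\sigma}a(s))+\frac{\sigma}{\pi-\sigma}\cos(\tfrac{\pi-\sigma}{\sigma}a(s))\big)+\frac{\pi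 x_0}{\sigma\tan\sigma}$; it is admissible, arc-length parametrized, with curvature $H(s)=\frac{\pi}{\sigma\sqrt{k^2-(s-L)^2}}$. *)

From Stdlib Require Import Reals Lra List.
From Coquelicot Require Import Coquelicot.
Open Scope R_scope.

Definition pds (f : R -> R -> R) : R -> R -> R :=
  fun s t => Derive (fun u => f u t) s.
Definition pdt (f : R -> R -> R) : R -> R -> R :=
  fun s t => Derive (fun u => f s u) t.

(* iterated partial derivative along a word of directions (true = s, false = t) *)
Fixpoint pdl (l : list bool) (f : R -> R -> R) : R -> R -> R :=
  match l with
  | nil => f
  | b :: l' => (if b then pds else pdt) (pdl l' f)
  end.

Definition smooth2 (f : R -> R -> R) : Prop :=
  forall (l : list bool) (s t : R),
    ex_derive (fun u => pdl l f u t) s /\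
    ex_derive (fun u => pdl l f s u) t /\
    continuous (fun p : R * R => pdl l f (fst p) (snd p)) (s, t).

Definition d1 (c : R -> R) : R -> R := fun s => Derive c s.
Definition d2 (c : R -> R) : R -> R := fun s => Derive (Derive c) s.

Definition speed (cx cy : R -> R) (s : R) : R :=
  sqrt (d1 cx s ^ 2 + d1 cy s ^ 2).

(* H = <gamma', gamma''^perp> / |gamma'|^3, with (xi,eta)^perp = (eta,-xi) *)
Definition curvature (cx cy : R -> R) (s : R) : R :=
  (d1 cx s * d2 cy s - d1 cy s * d2 cx s) / speed cx cy s ^ 3.

Definition normal_x (cx cy : R -> R) (s : R) : R := d1 cy s / speed cx cy s.
Definition normal_y (cx cy : R -> R) (s : R) : R := - d1 cx s / speed cx cy s.

Definition areaA (L : R) (cx cy : R -> R) : R :=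
  / 2 * RInt (fun s => cx s * d1 cy s - d1 cx s * cy s) 0 (2 * L).

Definition funcF (L : R) (cx cy : R -> R) : R :=
  RInt (fun s => speed cx cy s / curvature cx cy s) 0 (2 * L).

Definition admissible_curve (x0 L : R) (cx cy : R -> R) : Prop :=
  (forall (n : nat) (s : R), 0 <= s <= 2 * L ->
      ex_derive (Derive_n cx n) s /\ ex_derive (Derive_n cy n) s) /\
  (forall s, 0 <= s <= 2 * L -> speed cx cy s <> 0) /\
  (forall s, 0 <= s <= 2 * L -> 0 < curvature cx cy s) /\
  (forall s1 s2, 0 <= s1 <= 2 * L -> 0 <= s2 <= 2 * L ->
      cx s1 = cx s2 -> cy s1 = cy s2 -> s1 = s2) /\
  cx 0 = x0 /\ cy 0 = 0 /\ cx (2 * L) = - x0 /\ cy (2 * L) = 0 /\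
  (forall s, 0 < s < 2 * L -> 0 < cy s).

(* admissible variation V = (Vx, Vy) of gamma = (gx, gy) on [0,2L] x [-T,T]:
   V is (the restriction to the rectangle of) a smooth map, V(.,0) = gamma on
   [0,2L], and every V(.,t), |t| <= T, is admissible. *)
Definition admissible_variation (x0 L : R) (gx gy : R -> R)
    (Vx Vy : R -> R -> R) (T : R) : Prop :=
  0 < T /\ smooth2 Vx /\ smooth2 Vy /\
  (forall s, 0 <= s <= 2 * L -> Vx s 0 = gx s /\ Vy s 0 = gy s) /\
  (forall t, -T <= t <= T ->
      admissible_curve x0 L (fun s => Vx s t) (fun s => Vy s t)).

Definition sigma0 (x0 L : R) : R := PI * sqrt (x0 / (L + x0)).
Definition kk (x0 L : R) : R := L / sin (sigma0 x0 L).
Definition aa (x0 L : R) (s : R) : R := asin ((s - L) / kk x0 L).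

Definition gamma_x (x0 L : R) (s : R) : R :=
  let sg := sigma0 x0 L in let k := kk x0 L in let a := aa x0 L s in
  - (k / 2) * (sg / (PI + sg) * sin ((PI + sg) / sg * a)
               + sg / (PI - sg) * sin ((PI - sg) / sg * a)).

Definition gamma_y (x0 L : R) (s : R) : R :=
  let sg := sigma0 x0 L in let k := kk x0 L in let a := aa x0 L s in
  (k / 2) * (sg / (PI + sg) * cos ((PI + sg) / sg * a)
             + sg / (PI - sg) * cos ((PI - sg) / sg * a))
  + PI * x0 / (sg * tan sg).

Definition lambda0 (x0 L : R) : R := 2 * L / (L + x0).

(* The functional F - λ A is the integral over [0, 2L] of the density
   |V_s|^4 / (V_s × V_ss) - (λ/2) V × V_s, so it may be differentiated twice in t
   under the integral sign.  At t = 0 the curve is parametrized by arc length,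
   with unit tangent (-cos θ, -sin θ), θ' = H, and radius of curvature
   1/H = β √(k² - (s - L)²), which solves h h'' + h'² + β² = 0 with
   β² = x0/(L + x0) = 1 - λ/2.  With these relations the second t-derivative
   of the density is the integrand of the theorem plus the s-derivative of an
   explicit quadratic expression G in the jets of X and X'; hence the boundary
   term is G(2L) - G(0).  The endpoints are fixed and the tangent there is
   (1, 0), so G reduces to -h² ∂_s X'_y at both ends.  Finally, each curve
   stays in the upper half plane, so t ↦ ∂_s y(0, t) is nonnegative and
   vanishes at t = 0: its first t-derivative vanishes and its second is
   nonnegative, and symmetrically at s = 2L; this makes G(2L) - G(0) ≥ 0. *)

From Pilot Require Import Defs.
From Stdlib Require Import Reals Lra List FunctionalExtensionality.
From Coquelicot Require Import Coquelicot.
Open Scope R_scope.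

(** * One-sided derivatives and local extrema *)

Lemma locally_open_interval (a b x : R) : a < x < b -> locally x (fun u => a < u < b).
Proof.
  intros Hx. assert (He : 0 < Rmin (x - a) (b - x)) by (apply Rmin_pos; lra).
  exists (mkposreal _ He). intros u Hu. change (Rabs (u - x) < Rmin (x - a) (b - x)) in Hu.
  pose proof (Rmin_l (x - a) (b - x)). pose proof (Rmin_r (x - a) (b - x)).
  apply Rabs_def2 in Hu. lra.
Qed.

Lemma is_derive_neg_right (f : R -> R) (a l : R) :
  is_derive f a l -> l < 0 -> exists d, 0 < d /\ forall h, 0 < h < d -> f (a + h) < f a.
Proof.
  intros Hf Hl. apply is_derive_Reals in Hf.
  destruct (Hf (- l / 2) ltac:(lra)) as [d Hd].
  exists d. split; [apply cond_pos|]. intros h Hh.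
  specialize (Hd h ltac:(lra) ltac:(rewrite Rabs_right; lra)).
  apply Rabs_def2 in Hd.
  assert (E : f (a + h) - f a = (f (a + h) - f a) / h * h) by (field; lra).
  nra.
Qed.

Lemma is_derive_right_min (f : R -> R) (a l d : R) :
  is_derive f a l -> 0 < d -> (forall h, 0 < h < d -> f a <= f (a + h)) -> 0 <= l.
Proof.
  intros Hf Hd Hmin. apply Rnot_lt_le. intros Hl.
  destruct (is_derive_neg_right f a l Hf Hl) as [d' [Hd' Hdec]].
  pose proof (Rmin_l d d'). pose proof (Rmin_r d d'). pose proof (Rmin_pos d d' Hd Hd').
  specialize (Hdec (Rmin d d' / 2) ltac:(lra)). specialize (Hmin (Rmin d d' / 2) ltac:(lra)).
  lra.
Qed.

Lemma is_derive_left_min (f : R -> R) (a l d : R) :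
  is_derive f a l -> 0 < d -> (forall h, 0 < h < d -> f a <= f (a - h)) -> l <= 0.
Proof.
  intros Hf Hd Hmin.
  assert (Hr : is_derive (fun u => f (- u)) (- a) (- l)).
  { replace (- l) with (scal (-1) l) by (unfold scal; simpl; unfold mult; simpl; ring).
    apply (is_derive_comp f Ropp); [now rewrite Ropp_involutive|].
    auto_derive; [exact I|ring]. }
  enough (0 <= - l) by lra.
  apply (is_derive_right_min _ (- a) (- l) d Hr Hd). intros h Hh.
  rewrite Ropp_involutive, Ropp_plus_distr, Ropp_involutive. apply Hmin, Hh.
Qed.

Lemma is_derive_right_unique (f g : R -> R) (a l m d : R) :
  is_derive f a l -> is_derive g a m -> 0 < d ->
  (forall h, 0 <= h < d -> f (a + h) = g (a + h)) -> l = m.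
Proof.
  intros Hf Hg Hd Heq.
  assert (Ha : f a = g a) by (rewrite <- (Rplus_0_r a); apply Heq; lra).
  assert (0 <= l - m).
  { apply (is_derive_right_min (fun u => f u - g u) a _ d); auto.
    - apply (is_derive_minus f g); assumption.
    - intros h Hh. rewrite Ha, (Heq h) by lra. lra. }
  assert (0 <= m - l).
  { apply (is_derive_right_min (fun u => g u - f u) a _ d); auto.
    - apply (is_derive_minus g f); assumption.
    - intros h Hh. rewrite Ha, (Heq h) by lra. lra. }
  lra.
Qed.

Lemma is_derive_left_unique (f g : R -> R) (a l m d : R) :
  is_derive f a l -> is_derive g a m -> 0 < d ->
  (forall h, 0 <= h < d -> f (a - h) = g (a - h)) -> l = m.
Proof.
  intros Hf Hg Hd Heq.
  assert (Ha : f a = g a) by (rewrite <- (Rminus_0_r a); apply Heq; lra).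
  assert (l - m <= 0).
  { apply (is_derive_left_min (fun u => f u - g u) a _ d); auto.
    - apply (is_derive_minus f g); assumption.
    - intros h Hh. rewrite Ha, (Heq h) by lra. lra. }
  assert (m - l <= 0).
  { apply (is_derive_left_min (fun u => g u - f u) a _ d); auto.
    - apply (is_derive_minus g f); assumption.
    - intros h Hh. rewrite Ha, (Heq h) by lra. lra. }
  lra.
Qed.

Lemma is_derive2_local_min (w w1 : R -> R) (w2 d : R) : 0 < d ->
  (forall u, -d < u < d -> is_derive w u (w1 u)) -> is_derive w1 0 w2 ->
  (forall u, -d < u < d -> 0 <= w u) -> w 0 = 0 -> w1 0 = 0 /\ 0 <= w2.
Proof.
  intros Hd Hw Hw1 Hpos Hw0.
  assert (Hcrit : w1 0 = 0).
  { apply Rle_antisym.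
    - apply (is_derive_left_min w 0 _ d (Hw 0 ltac:(lra)) Hd).
      intros h Hh. rewrite Hw0. apply Hpos. lra.
    - apply (is_derive_right_min w 0 _ d (Hw 0 ltac:(lra)) Hd).
      intros h Hh. rewrite Hw0. apply Hpos. lra. }
  split; [exact Hcrit|]. apply Rnot_lt_le. intros Hneg.
  destruct (is_derive_neg_right w1 0 w2 Hw1 Hneg) as [d' [Hd' Hdec]].
  pose proof (Rmin_l d d'). pose proof (Rmin_r d d'). pose proof (Rmin_pos d d' Hd Hd').
  set (b := Rmin d d' / 2).
  destruct (MVT_cor2 w w1 0 b ltac:(unfold b; lra)) as [c [Ec Hc]].
  { intros c Hc. apply is_derive_Reals, Hw. unfold b in *; lra. }
  specialize (Hdec c ltac:(unfold b in *; lra)). rewrite Rplus_0_l, Hcrit in Hdec.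
  specialize (Hpos b ltac:(unfold b; lra)). nra.
Qed.

(** * Parameter integrals and smooth maps of two variables *)

Lemma continuity_2d_pt_swap (g : R -> R -> R) (s t : R) :
  continuity_2d_pt g s t -> continuity_2d_pt (fun t s => g s t) t s.
Proof. intros H eps. destruct (H eps) as [d Hd]. exists d. intros u v Hu Hv. now apply Hd. Qed.

Lemma continuity_2d_pt_continuous_snd (g : R -> R -> R) (x y : R) :
  continuity_2d_pt g x y -> continuous (fun v => g x v) y.
Proof.
  intros H. apply continuity_pt_filterlim. intros eps Heps.
  destruct (H (mkposreal eps Heps)) as [d Hd].
  exists d. split; [apply cond_pos|]. intros v [_ Hv]. apply Hd; [|exact Hv].
  rewrite Rminus_eq_0, Rabs_R0. apply cond_pos.
Qed.

Lemma continuity_2d_pt_pow (g : R -> R -> R) (x y : R) (n : nat) :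
  continuity_2d_pt g x y -> continuity_2d_pt (fun u v => g u v ^ n) x y.
Proof.
  intros H. induction n as [|n IH]; simpl.
  - apply continuity_2d_pt_const.
  - now apply continuity_2d_pt_mult.
Qed.

Lemma ex_RInt_continuity_2d_pt (g : R -> R -> R) (t a b : R) : a <= b ->
  (forall s, a <= s <= b -> continuity_2d_pt g t s) -> ex_RInt (fun s => g t s) a b.
Proof.
  intros Hab Hg. apply (ex_RInt_continuous (V := R_CompleteNormedModule)). intros s Hs.
  rewrite Rmin_left, Rmax_right in Hs by lra.
  now apply continuity_2d_pt_continuous_snd, Hg.
Qed.

Lemma is_derive_RInt_strip (Om : R -> R -> Prop) (g g1 : R -> R -> R) (a b T : R) :
  a <= b ->
  (forall t s, Om t s -> locally_2d Om t s) ->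
  (forall t s, -T < t < T -> a <= s <= b -> Om t s) ->
  (forall t s, Om t s -> is_derive (fun z => g z s) t (g1 t s)) ->
  (forall t s, Om t s -> continuity_2d_pt g t s) ->
  (forall t s, Om t s -> continuity_2d_pt g1 t s) ->
  forall t, -T < t < T ->
  is_derive (fun z => RInt (fun s => g z s) a b) t (RInt (fun s => g1 t s) a b).
Proof.
  intros Hab Hopen Hstrip Hd Hc Hc1 t Ht.
  assert (Hloc : locally t (fun z => -T < z < T)) by now apply locally_open_interval.
  rewrite (RInt_ext _ (fun s => Derive (fun u => g u s) t)).
  2: { intros s Hs. rewrite Rmin_left, Rmax_right in Hs by lra.
       symmetry. apply is_derive_unique, Hd, Hstrip; lra. }
  apply (is_derive_RInt_param g a b t).
  - apply (filter_imp (fun z => -T < z < T)); [|exact Hloc]. intros z Hz s Hs.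
    rewrite Rmin_left, Rmax_right in Hs by lra. eexists. now apply Hd, Hstrip.
  - intros s Hs. rewrite Rmin_left, Rmax_right in Hs by lra.
    apply continuity_2d_pt_ext_loc with (f := g1); [|now apply Hc1, Hstrip].
    apply locally_2d_impl with (P := Om); [|now apply Hopen, Hstrip].
    apply locally_2d_forall. intros u v Huv. symmetry. now apply is_derive_unique, Hd.
  - apply (filter_imp (fun z => -T < z < T)); [|exact Hloc]. intros z Hz.
    apply ex_RInt_continuity_2d_pt; [exact Hab|]. intros s Hs. now apply Hc, Hstrip.
Qed.

Lemma pdl_app (l m : list bool) (f : R -> R -> R) : pdl l (pdl m f) = pdl (l ++ m) f.
Proof. induction l as [|b l IH]; simpl; [reflexivity|]. now rewrite IH. Qed.

Lemma smooth2_pdl (l : list bool) (f : R -> R -> R) : smooth2 f -> smooth2 (pdl l f).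
Proof. intros Hf m s t. rewrite pdl_app. apply Hf. Qed.

Lemma smooth2_pds (f : R -> R -> R) : smooth2 f -> smooth2 (pds f).
Proof. exact (smooth2_pdl (true :: nil) f). Qed.

Lemma smooth2_pdt (f : R -> R -> R) : smooth2 f -> smooth2 (pdt f).
Proof. exact (smooth2_pdl (false :: nil) f). Qed.

#[local] Hint Resolve smooth2_pds smooth2_pdt : smooth.

Lemma smooth2_continuity_2d_pt (f : R -> R -> R) (s t : R) : smooth2 f -> continuity_2d_pt f s t.
Proof. intros H. apply continuity_2d_pt_filterlim, (H nil s t). Qed.

Lemma smooth2_is_derive_s (f : R -> R -> R) (s t : R) :
  smooth2 f -> is_derive (fun u => f u t) s (pds f s t).
Proof. intros H. apply Derive_correct, (H nil s t). Qed.

Lemma smooth2_is_derive_t (f : R -> R -> R) (s t : R) :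
  smooth2 f -> is_derive (fun u => f s u) t (pdt f s t).
Proof. intros H. apply Derive_correct, (H nil s t). Qed.

Lemma smooth2_continuous_s (f : R -> R -> R) (s t : R) :
  smooth2 f -> continuous (fun u => f u t) s.
Proof.
  intros H. apply (continuity_2d_pt_continuous_snd (fun t s => f s t)).
  now apply continuity_2d_pt_swap, smooth2_continuity_2d_pt.
Qed.

Lemma pdt_pds (f : R -> R -> R) : smooth2 f -> pdt (pds f) = pds (pdt f).
Proof.
  intros H. apply functional_extensionality; intro s.
  apply functional_extensionality; intro t. symmetry. apply (Schwarz f s t).
  - apply locally_2d_forall. intros u v.
    destruct (H nil u v) as [? [? _]], (H (false :: nil) u v) as [? _],
      (H (true :: nil) u v) as [_ [? _]].
    now repeat split.
  - exact (smooth2_continuity_2d_pt (pdl (true :: false :: nil) f) s t (smooth2_pdl _ f H)).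
  - exact (smooth2_continuity_2d_pt (pdl (false :: true :: nil) f) s t (smooth2_pdl _ f H)).
Qed.

(** * Differentiating rational expressions *)

Lemma is_derive_eq (f : R -> R) (x l l' : R) : is_derive f x l -> l = l' -> is_derive f x l'.
Proof. now intros H <-. Qed.

Lemma is_derive_Rplus (f g : R -> R) (x a b : R) :
  is_derive f x a -> is_derive g x b -> is_derive (fun t => f t + g t) x (a + b).
Proof. intros. now apply (is_derive_plus f g). Qed.

Lemma is_derive_Rminus (f g : R -> R) (x a b : R) :
  is_derive f x a -> is_derive g x b -> is_derive (fun t => f t - g t) x (a - b).
Proof. intros. now apply (is_derive_minus f g). Qed.

Lemma is_derive_Ropp (f : R -> R) (x a : R) :
  is_derive f x a -> is_derive (fun t => - f t) x (- a).
Proof. intros. now apply (is_derive_opp f). Qed.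

Lemma is_derive_Rmult (f g : R -> R) (x a b : R) :
  is_derive f x a -> is_derive g x b -> is_derive (fun t => f t * g t) x (a * g x + f x * b).
Proof. intros. apply (is_derive_mult f g); try assumption. intros; apply Rmult_comm. Qed.

Lemma is_derive_Rdiv (f g : R -> R) (x a b : R) :
  is_derive f x a -> is_derive g x b -> g x <> 0 ->
  is_derive (fun t => f t / g t) x ((a * g x - f x * b) / g x ^ 2).
Proof. intros. now apply (is_derive_div f g). Qed.

Lemma is_derive_Rsqr (f : R -> R) (x a : R) :
  is_derive f x a -> is_derive (fun t => f t ^ 2) x (2 * a * f x).
Proof.
  intros H. eapply is_derive_eq; [apply (is_derive_pow f 2 x a H)|].
  unfold scal; simpl; unfold mult; simpl. ring.
Qed.

Lemma is_derive_Rconst (c x : R) : is_derive (fun _ => c) x 0.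
Proof. apply (is_derive_const (K := R_AbsRing) (V := R_NormedModule)). Qed.

(* Symbolic differentiation of a rational expression whose atoms have known
   derivatives in the context; nonvanishing of denominators is left as goals. *)
Ltac derive_expr :=
  match goal with
  | H : is_derive ?f _ _ |- is_derive ?f _ _ => exact H
  | |- is_derive (fun t => @?F t + @?G t) _ _ =>
      eapply (is_derive_Rplus F G); [derive_expr|derive_expr]
  | |- is_derive (fun t => @?F t - @?G t) _ _ =>
      eapply (is_derive_Rminus F G); [derive_expr|derive_expr]
  | |- is_derive (fun t => @?F t * @?G t) _ _ =>
      eapply (is_derive_Rmult F G); [derive_expr|derive_expr]
  | |- is_derive (fun t => @?F t / @?G t) _ _ =>
      eapply (is_derive_Rdiv F G); [derive_expr|derive_expr|]
  | |- is_derive (fun t => - @?F t) _ _ => eapply (is_derive_Ropp F); derive_expr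
  | |- is_derive (fun t => @?F t ^ 2) _ _ => eapply (is_derive_Rsqr F); derive_expr
  | |- is_derive _ _ _ => apply is_derive_Rconst
  end.

Ltac rewrite_Derive H :=
  match type of H with is_derive _ ?x ?l =>
    match goal with |- context [Derive ?g x] => rewrite (is_derive_unique g x l H) end
  end.

Lemma continuous_Rpow (f : R -> R) (n : nat) (x : R) :
  continuous f x -> continuous (fun t => f t ^ n) x.
Proof.
  intros H. induction n as [|n IH]; simpl.
  - apply continuous_const.
  - now apply (continuous_mult f (fun t => f t ^ n)).
Qed.

Lemma continuous_Rdiv (f g : R -> R) (x : R) :
  continuous f x -> continuous g x -> g x <> 0 -> continuous (fun t => f t / g t) x.
Proof.
  intros Hf Hg Hn. apply (continuous_mult f (fun t => / g t)); [exact Hf|].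
  now apply continuous_Rinv_comp.
Qed.

Lemma is_derive_continuous (f : R -> R) (x l : R) : is_derive f x l -> continuous f x.
Proof.
  intros H. apply (ex_derive_continuous (K := R_AbsRing) (V := R_NormedModule)). now exists l.
Qed.

Ltac continuity_expr :=
  match goal with
  | H : continuous ?f _ |- continuous ?f _ => exact H
  | H : is_derive ?f _ _ |- continuous ?f _ => exact (is_derive_continuous _ _ _ H)
  | |- continuous (fun t => @?F t + @?G t) _ => apply (continuous_plus F G); continuity_expr
  | |- continuous (fun t => @?F t - @?G t) _ => apply (continuous_minus F G); continuity_expr
  | |- continuous (fun t => @?F t * @?G t) _ => apply (continuous_mult F G); continuity_expr
  | |- continuous (fun t => @?F t / @?G t) _ =>
      apply (continuous_Rdiv F G); [continuity_expr|continuity_expr|]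
  | |- continuous (fun t => - @?F t) _ => apply (continuous_opp F); continuity_expr
  | |- continuous (fun t => @?F t ^ ?n) _ => apply (continuous_Rpow F n); continuity_expr
  | |- continuous _ _ => apply continuous_const
  end.

Ltac continuity_2d_expr :=
  match goal with
  | |- continuity_2d_pt (fun u v => @?A u v + @?B u v) _ _ =>
      apply (continuity_2d_pt_plus A B); continuity_2d_expr
  | |- continuity_2d_pt (fun u v => @?A u v - @?B u v) _ _ =>
      apply (continuity_2d_pt_minus A B); continuity_2d_expr
  | |- continuity_2d_pt (fun u v => @?A u v * @?B u v) _ _ =>
      apply (continuity_2d_pt_mult A B); continuity_2d_expr
  | |- continuity_2d_pt (fun u v => - @?A u v) _ _ =>
      apply (continuity_2d_pt_opp A); continuity_2d_expr
  | |- continuity_2d_pt (fun u v => @?A u v / @?B u v) _ _ =>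
      apply (continuity_2d_pt_mult A (fun u v => / B u v));
      [continuity_2d_expr | apply (continuity_2d_pt_inv B); [continuity_2d_expr|]]
  | |- continuity_2d_pt (fun u v => @?A u v ^ ?n) _ _ =>
      apply (continuity_2d_pt_pow A); continuity_2d_expr
  | |- continuity_2d_pt (fun u v => ?c) _ _ => apply continuity_2d_pt_const
  | |- continuity_2d_pt (fun u v => ?g v u) _ _ =>
      apply (continuity_2d_pt_swap g), smooth2_continuity_2d_pt; auto with smooth
  end.

(** * The energy density *)

(* Position, first and second [s]-derivatives of a plane curve at a point. *)
Record jet := Jet { jx : R; jx' : R; jx'' : R; jy : R; jy' : R; jy'' : R }.

Definition cross_s (J : jet) : R := jx' J * jy'' J - jy' J * jx'' J.

(* |γ'| / H = |γ'|^4 / <γ', γ''^⊥> for the functional [F], and [2 mu] plays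
   the role of the multiplier λ of the area. *)
Definition density (mu : R) (J : jet) : R :=
  (jx' J ^ 2 + jy' J ^ 2) ^ 2 / cross_s J - mu * (jx J * jy' J - jx' J * jy J).

Definition density_dt (mu : R) (J D : jet) : R :=
  let q := jx' J ^ 2 + jy' J ^ 2 in
  let c := cross_s J in
  let qt := 2 * (jx' J * jx' D + jy' J * jy' D) in
  let ct := jx' D * jy'' J + jx' J * jy'' D - jy' D * jx'' J - jy' J * jx'' D in
  2 * q * qt / c - q ^ 2 * ct / c ^ 2
  - mu * (jx D * jy' J + jx J * jy' D - jx' D * jy J - jx' J * jy D).

Definition density_dtt (mu : R) (J D E : jet) : R :=
  let q := jx' J ^ 2 + jy' J ^ 2 in
  let c := cross_s J in
  let qt := 2 * (jx' J * jx' D + jy' J * jy' D) in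
  let ct := jx' D * jy'' J + jx' J * jy'' D - jy' D * jx'' J - jy' J * jx'' D in
  let qtt := 2 * (jx' D ^ 2 + jy' D ^ 2) + 2 * (jx' J * jx' E + jy' J * jy' E) in
  let ctt := jx' E * jy'' J + 2 * jx' D * jy'' D + jx' J * jy'' E
             - jy' E * jx'' J - 2 * jy' D * jx'' D - jy' J * jx'' E in
  2 * qt ^ 2 / c + 2 * q * qtt / c - 4 * q * qt * ct / c ^ 2 - q ^ 2 * ctt / c ^ 2
  + 2 * q ^ 2 * ct ^ 2 / c ^ 3
  - mu * (jx E * jy' J + 2 * jx D * jy' D + jx J * jy' E
          - jx' E * jy J - 2 * jx' D * jy D - jx' J * jy E).

Definition jet_derive (J : R -> jet) (t : R) (D : jet) : Prop :=
  is_derive (fun z => jx (J z)) t (jx D) /\ is_derive (fun z => jx' (J z)) t (jx' D) /\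
  is_derive (fun z => jx'' (J z)) t (jx'' D) /\ is_derive (fun z => jy (J z)) t (jy D) /\
  is_derive (fun z => jy' (J z)) t (jy' D) /\ is_derive (fun z => jy'' (J z)) t (jy'' D).

Lemma is_derive_density (mu : R) (J : R -> jet) (t : R) (D : jet) :
  jet_derive J t D -> cross_s (J t) <> 0 ->
  is_derive (fun z => density mu (J z)) t (density_dt mu (J t) D).
Proof.
  intros (? & ? & ? & ? & ? & ?) Hc. unfold density, density_dt, cross_s in *.
  eapply is_derive_eq; [derive_expr; exact Hc|]. cbv zeta.
  revert Hc. generalize (J t) D. intros [] []. simpl. intros Hc. field. exact Hc.
Qed.

Lemma is_derive_density_dt (mu : R) (J D : R -> jet) (t : R) (E : jet) :
  jet_derive J t (D t) -> jet_derive D t E -> cross_s (J t) <> 0 ->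
  is_derive (fun z => density_dt mu (J z) (D z)) t (density_dtt mu (J t) (D t) E).
Proof.
  intros (? & ? & ? & ? & ? & ?) (? & ? & ? & ? & ? & ?) Hc.
  unfold density_dt, density_dtt, cross_s in *.
  cbv zeta. eapply is_derive_eq; [derive_expr; try apply pow_nonzero; exact Hc|].
  revert Hc. generalize (J t) (D t) E. intros [] [] []. simpl. intros Hc. field. exact Hc.
Qed.

(* Both sides are [0] when [cross = 0], because of the convention [x / 0 = 0]. *)
Lemma speed_div_curvature (a1 a2 b1 b2 : R) :
  sqrt (a1 ^ 2 + a2 ^ 2) / ((a1 * b2 - a2 * b1) / sqrt (a1 ^ 2 + a2 ^ 2) ^ 3)
  = (a1 ^ 2 + a2 ^ 2) ^ 2 / (a1 * b2 - a2 * b1).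
Proof.
  destruct (Req_dec (a1 * b2 - a2 * b1) 0) as [Hc|Hc].
  - rewrite Hc. unfold Rdiv. now rewrite !Rmult_0_l, Rinv_0, !Rmult_0_r.
  - assert (Hq : 0 < a1 ^ 2 + a2 ^ 2).
    { destruct (Req_dec a1 0) as [->|E1]; [destruct (Req_dec a2 0) as [->|E2]|].
      - exfalso. apply Hc. ring.
      - pose proof (pow2_gt_0 a2 E2). nra.
      - pose proof (pow2_gt_0 a1 E1). nra. }
    assert (Hs : 0 < sqrt (a1 ^ 2 + a2 ^ 2)) by now apply sqrt_lt_R0.
    assert (Es : sqrt (a1 ^ 2 + a2 ^ 2) ^ 2 = a1 ^ 2 + a2 ^ 2) by (apply pow2_sqrt; lra).
    set (q := a1 ^ 2 + a2 ^ 2) in *. set (S := sqrt q) in *. rewrite <- Es.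
    field. split; lra.
Qed.

(** * Frenet frames and the stability form *)

Record frame := Frame { tx : R; ty : R; px : R; py : R; rad : R; rad' : R }.

Definition frame_jet (F : frame) : jet :=
  {| jx := px F; jx' := tx F; jx'' := - ty F / rad F;
     jy := py F; jy' := ty F; jy'' := tx F / rad F |}.

(* [F u] is the Frenet frame at [u] of a unit-speed curve whose radius of
   curvature [rad] solves [rad rad'' + rad'^2 + al = 0]. *)
Definition is_frenet_frame (al : R) (F : R -> frame) (s : R) : Prop :=
  is_derive (fun u => tx (F u)) s (- ty (F s) / rad (F s)) /\
  is_derive (fun u => ty (F u)) s (tx (F s) / rad (F s)) /\
  is_derive (fun u => px (F u)) s (tx (F s)) /\
  is_derive (fun u => py (F u)) s (ty (F s)) /\
  is_derive (fun u => rad (F u)) s (rad' (F s)) /\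
  is_derive (fun u => rad' (F u)) s ((- al - rad' (F s) ^ 2) / rad (F s)) /\
  rad (F s) <> 0 /\ tx (F s) ^ 2 + ty (F s) ^ 2 = 1.

Definition is_jet (V : R -> jet) (s : R) : Prop :=
  is_derive (fun u => jx (V u)) s (jx' (V s)) /\ is_derive (fun u => jx' (V u)) s (jx'' (V s)) /\
  is_derive (fun u => jy (V u)) s (jy' (V s)) /\ is_derive (fun u => jy' (V u)) s (jy'' (V s)) /\
  continuous (fun u => jx'' (V u)) s /\ continuous (fun u => jy'' (V u)) s.

Definition normal_part (F : frame) (V : jet) : R := jx V * ty F - jy V * tx F.

Definition normal_part_ds (F : frame) (V : jet) : R :=
  (tx F * jx V + ty F * jy V) / rad F + ty F * jx' V - tx F * jy' V.

Definition normal_part_dss (F : frame) (V : jet) : R :=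
  (tx F * jy V - ty F * jx V - rad' F * (tx F * jx V + ty F * jy V)) / rad F ^ 2
  + 2 * (tx F * jx' V + ty F * jy' V) / rad F + ty F * jx'' V - tx F * jy'' V.

(* The integrand of the theorem, written with [H = 1 / rad] and [λ = 2 - 2 al]. *)
Definition stability_form (al : R) (F : frame) (X : jet) : R :=
  2 * al / rad F * normal_part F X ^ 2 - 2 * rad F * normal_part_ds F X ^ 2
  + 2 * rad F ^ 3 * normal_part_dss F X ^ 2.

(* A potential, found by computer algebra, whose [s]-derivative is the
   defect between the second variation density and the stability form. *)
Definition boundary_potential (al : R) (F : frame) (X W : jet) : R :=
  let T1 := tx F in let T2 := ty F in let g1 := px F in let g2 := py F in
  let h := rad F in let h1 := rad' F in
  let X1 := jx X in let X1s := jx' X in let X2 := jy X in let X2s := jy' X in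
  let Y1 := jx W in let Y1s := jx' W in let Y2 := jy W in let Y2s := jy' W in
  2*X1*X2 + 2*al*X1*X2 + 2*h1*X2^2 + 4*h*X1*X1s + 4*h*h1*X1s*X2 - 2*h^2*X1s*X2s
  + g2*Y1 - g2*al*Y1 - g1*Y2 + g1*al*Y2 + 2*T2*h*Y2 - 2*T2*h*h1*Y1 + T2*h^2*Y1s
  + 2*T1*h*Y1 + 2*T1*h*h1*Y2 - T1*h^2*Y2s - 2*T1*T2*X2^2 + 2*T1*T2*X1^2
  - 2*T1*T2*al*X2^2 + 2*T1*T2*al*X1^2 + 4*T1*T2*h1*X1*X2 - 4*T1*T2*h*X1s*X2
  - 4*T1*T2*h*X1*X2s - 4*T1*T2*h*h1*X2*X2s + 4*T1*T2*h*h1*X1*X1s + 2*T1*T2*h^2*X2s^2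
  - 2*T1*T2*h^2*X1s^2 - 4*T1^2*X1*X2 - 4*T1^2*al*X1*X2 - 2*T1^2*h1*X2^2
  + 2*T1^2*h1*X1^2 + 4*T1^2*h*X2*X2s - 4*T1^2*h*X1*X1s - 4*T1^2*h*h1*X1s*X2
  - 4*T1^2*h*h1*X1*X2s + 4*T1^2*h^2*X1s*X2s.

Lemma cross_s_frame_jet (F : frame) :
  rad F <> 0 -> tx F ^ 2 + ty F ^ 2 = 1 -> cross_s (frame_jet F) = 1 / rad F.
Proof. intros Hr Hn. unfold cross_s; cbn. rewrite <- Hn. field. exact Hr. Qed.

Section FrenetFrame.
Variables (al : R) (F : R -> frame) (s : R).
Hypothesis HF : is_frenet_frame al F s.

Lemma is_derive_normal_part (V : R -> jet) : is_jet V s ->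
  is_derive (fun u => normal_part (F u) (V u)) s (normal_part_ds (F s) (V s)).
Proof.
  destruct HF as (? & ? & ? & ? & ? & ? & Hr & _). intros (? & ? & ? & ? & _).
  unfold normal_part, normal_part_ds.
  eapply is_derive_eq; [derive_expr|].
  revert Hr. generalize (F s) (V s). intros [] []. simpl. intros Hr. field. exact Hr.
Qed.

Lemma is_derive_normal_part_ds (V : R -> jet) : is_jet V s ->
  is_derive (fun u => normal_part_ds (F u) (V u)) s (normal_part_dss (F s) (V s)).
Proof.
  destruct HF as (? & ? & ? & ? & ? & ? & Hr & _). intros (? & ? & ? & ? & _).
  unfold normal_part_ds, normal_part_dss.
  eapply is_derive_eq; [derive_expr; exact Hr|].
  revert Hr. generalize (F s) (V s). intros [] []. simpl. intros Hr. field. exact Hr.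
Qed.

Lemma is_derive_boundary_potential (X W : R -> jet) : is_jet X s -> is_jet W s ->
  is_derive (fun u => boundary_potential al (F u) (X u) (W u)) s
    (density_dtt (1 - al) (frame_jet (F s)) (X s) (W s) - stability_form al (F s) (X s)).
Proof.
  destruct HF as (? & ? & ? & ? & ? & ? & Hr & Hn).
  intros (? & ? & ? & ? & _) (? & ? & ? & ? & _).
  eapply is_derive_eq; [unfold boundary_potential; cbv zeta; derive_expr|].
  unfold density_dtt. cbv zeta. rewrite cross_s_frame_jet by assumption.
  change (jx' (frame_jet (F s))) with (tx (F s)). change (jy' (frame_jet (F s))) with (ty (F s)).
  rewrite Hn.
  unfold stability_form, normal_part, normal_part_ds, normal_part_dss.
  revert Hr Hn. generalize (F s) (X s) (W s).
  intros [T1 T2 g1 g2 h h1] [X1 X1s X1ss X2 X2s X2ss] [Y1 Y1s Y1ss Y2 Y2s Y2ss].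
  simpl. intros Hr Hn.
  (* [field] cannot use [T1^2 + T2^2 = 1]: the defect is an explicit multiple of it. *)
  match goal with |- ?lhs = ?rhs =>
    assert (E : lhs - rhs = (1 - T1^2 - T2^2) *
      (- 2*al*X2^2/h - 2*h1^2*X2^2/h + 4*X1*X2s + 4*h1*X2*X2s + 4*h1*X1*X1s - 4*h*X2s^2
       + 4*h*X1*X1ss + 4*h*h1*X1ss*X2 - 4*h^2*X1ss*X2s)) by (field; exact Hr) end.
  replace (1 - T1^2 - T2^2) with 0 in E by (simpl; lra). lra.
Qed.

Lemma continuous_second_variation_defect (X W : R -> jet) : is_jet X s -> is_jet W s ->
  continuous (fun u => density_dtt (1 - al) (frame_jet (F u)) (X u) (W u)
                       - stability_form al (F u) (X u)) s.
Proof.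
  intros HX HW.
  pose proof (is_derive_normal_part X HX). pose proof (is_derive_normal_part_ds X HX).
  destruct HF as (? & ? & ? & ? & ? & ? & Hr & Hn).
  destruct HX as (? & ? & ? & ? & ? & ?), HW as (? & ? & ? & ? & ? & ?).
  assert (Hc : cross_s (frame_jet (F s)) <> 0).
  { rewrite cross_s_frame_jet by assumption. unfold Rdiv. rewrite Rmult_1_l.
    now apply Rinv_neq_0_compat. }
  unfold density_dtt, stability_form, normal_part_dss, cross_s in *. cbv zeta.
  cbn [frame_jet jx jx' jx'' jy jy' jy''] in *.
  continuity_expr; repeat apply pow_nonzero; assumption.
Qed.
End FrenetFrame.

(** * The explicit curve γ(x0, L) *)

Section ExplicitCurve.
Variables x0 L : R.
Hypotheses (Hx0 : 0 < 3 * x0) (HL : 3 * x0 < L).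

Definition alpha : R := x0 / (L + x0).
Definition beta : R := sigma0 x0 L / PI.
Definition arc_domain (s : R) : Prop := L - kk x0 L < s < L + kk x0 L.
Definition radius (s : R) : R := beta * sqrt (kk x0 L ^ 2 - (s - L) ^ 2).
Definition radius_ds (s : R) : R := - beta * (s - L) / sqrt (kk x0 L ^ 2 - (s - L) ^ 2).
Definition turning_angle (s : R) : R := PI * aa x0 L s / sigma0 x0 L.
Definition tangent_x (s : R) : R := - cos (turning_angle s).
Definition tangent_y (s : R) : R := - sin (turning_angle s).

Definition curve_frame (s : R) : frame :=
  Frame (tangent_x s) (tangent_y s) (gamma_x x0 L s) (gamma_y x0 L s) (radius s) (radius_ds s).

Lemma alpha_bounds : 0 < alpha < 1 / 4.
Proof.
  unfold alpha. split; [apply Rdiv_lt_0_compat; lra|].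
  apply Rmult_lt_reg_r with (L + x0); [lra|].
  unfold Rdiv. rewrite Rmult_assoc, Rinv_l by lra. lra.
Qed.

Lemma beta_sqr : beta ^ 2 = alpha.
Proof.
  pose proof alpha_bounds. unfold beta, sigma0. fold alpha.
  field_simplify; [|apply PI_neq0]. rewrite pow2_sqrt by lra. reflexivity.
Qed.

Lemma beta_bounds : 0 < beta < 1 / 2.
Proof.
  pose proof alpha_bounds. unfold beta, sigma0. fold alpha.
  replace (PI * sqrt alpha / PI) with (sqrt alpha) by (field; apply PI_neq0).
  split; [apply sqrt_lt_R0; lra|].
  rewrite <- (sqrt_pow2 (1 / 2)) by lra. apply sqrt_lt_1_alt; lra.
Qed.

Lemma sigma0_bounds : 0 < sigma0 x0 L < PI / 2.
Proof.
  replace (sigma0 x0 L) with (PI * beta) by (unfold beta; field; apply PI_neq0).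
  pose proof beta_bounds. pose proof PI_RGT_0. split; nra.
Qed.

Lemma L_lt_kk : L < kk x0 L.
Proof.
  pose proof sigma0_bounds. pose proof PI_RGT_0.
  assert (0 < sin (sigma0 x0 L)) by (apply sin_gt_0; lra).
  assert (sin (sigma0 x0 L) < 1) by (rewrite <- sin_PI2; apply sin_increasing_1; lra).
  unfold kk. apply Rmult_lt_reg_r with (sin (sigma0 x0 L)); [lra|].
  unfold Rdiv. rewrite Rmult_assoc, Rinv_l by lra. nra.
Qed.

Lemma arc_domain_of_interval (s : R) : 0 <= s <= 2 * L -> arc_domain s.
Proof. pose proof L_lt_kk. unfold arc_domain. lra. Qed.

Lemma tangent_norm (s : R) : tangent_x s ^ 2 + tangent_y s ^ 2 = 1.
Proof.
  unfold tangent_x, tangent_y. rewrite <- (sin2_cos2 (turning_angle s)). unfold Rsqr. ring.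
Qed.

Section OnArc.
Variable s : R.
Hypothesis Hs : arc_domain s.

Lemma sqrt_arc_pos : 0 < sqrt (kk x0 L ^ 2 - (s - L) ^ 2).
Proof. pose proof L_lt_kk. unfold arc_domain in Hs. apply sqrt_lt_R0. nra. Qed.

Lemma radius_pos : 0 < radius s.
Proof. pose proof sqrt_arc_pos. pose proof beta_bounds. unfold radius. nra. Qed.

Lemma arcsin_arg_bounds : -1 < (s - L) / kk x0 L < 1.
Proof.
  pose proof L_lt_kk. unfold arc_domain in Hs.
  split; apply Rmult_lt_reg_r with (kk x0 L); try lra;
    unfold Rdiv; rewrite Rmult_assoc, Rinv_l by lra; lra.
Qed.

Lemma one_minus_arg_sqr :
  1 - ((s - L) / kk x0 L)² = (kk x0 L ^ 2 - (s - L) ^ 2) / kk x0 L ^ 2.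
Proof. pose proof L_lt_kk. unfold Rsqr. field. lra. Qed.

Lemma cos_aa : cos (aa x0 L s) = sqrt (kk x0 L ^ 2 - (s - L) ^ 2) / kk x0 L.
Proof.
  pose proof arcsin_arg_bounds. pose proof L_lt_kk. unfold aa.
  rewrite cos_asin, one_minus_arg_sqr by lra.
  rewrite sqrt_div_alt, sqrt_pow2 by (try apply pow_lt; lra). reflexivity.
Qed.

Lemma is_derive_aa : is_derive (aa x0 L) s (1 / sqrt (kk x0 L ^ 2 - (s - L) ^ 2)).
Proof.
  pose proof arcsin_arg_bounds. pose proof L_lt_kk. pose proof sqrt_arc_pos.
  assert (Hasin : is_derive asin ((s - L) / kk x0 L) (1 / sqrt (1 - ((s - L) / kk x0 L)²))).
  { apply is_derive_Reals.
    apply (derive_pt_eq_1 _ _ _ (derivable_pt_asin ((s - L) / kk x0 L) ltac:(lra))).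
    apply derive_pt_asin. }
  unfold aa. eapply is_derive_eq.
  - apply (is_derive_comp asin (fun u => (u - L) / kk x0 L)); [exact Hasin|].
    auto_derive; [lra|reflexivity].
  - unfold scal, mult; cbn -[pow].
    rewrite one_minus_arg_sqr, sqrt_div_alt, sqrt_pow2 by (try apply pow_lt; lra).
    field. lra.
Qed.

Lemma is_derive_turning_angle : is_derive turning_angle s (1 / radius s).
Proof.
  pose proof is_derive_aa as Ha. pose proof sigma0_bounds. pose proof radius_pos.
  pose proof sqrt_arc_pos. pose proof beta_bounds. pose proof PI_RGT_0.
  unfold turning_angle. auto_derive; [eexists; eassumption|].
  rewrite_Derive Ha. unfold radius, beta. field. repeat split; lra.
Qed.

Lemma is_derive_tangent_x : is_derive tangent_x s (- tangent_y s / radius s).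
Proof.
  pose proof is_derive_turning_angle as Ht. pose proof radius_pos.
  unfold tangent_x, tangent_y. auto_derive; [eexists; eassumption|].
  rewrite_Derive Ht. field. lra.
Qed.

Lemma is_derive_tangent_y : is_derive tangent_y s (tangent_x s / radius s).
Proof.
  pose proof is_derive_turning_angle as Ht. pose proof radius_pos.
  unfold tangent_x, tangent_y. auto_derive; [eexists; eassumption|].
  rewrite_Derive Ht. field. lra.
Qed.

Lemma is_derive_gamma_x : is_derive (gamma_x x0 L) s (tangent_x s).
Proof.
  pose proof is_derive_turning_angle as Ht. pose proof is_derive_aa as Ha.
  pose proof sigma0_bounds. pose proof PI_RGT_0. pose proof sqrt_arc_pos.
  pose proof beta_bounds. pose proof L_lt_kk.
  apply (is_derive_ext (fun u => - (kk x0 L / 2) *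
      (sigma0 x0 L / (PI + sigma0 x0 L) * sin (turning_angle u + aa x0 L u)
       + sigma0 x0 L / (PI - sigma0 x0 L) * sin (turning_angle u - aa x0 L u)))).
  { intros u. unfold gamma_x, turning_angle. cbv zeta.
    replace ((PI + sigma0 x0 L) / sigma0 x0 L * aa x0 L u)
      with (PI * aa x0 L u / sigma0 x0 L + aa x0 L u) by (field; lra).
    replace ((PI - sigma0 x0 L) / sigma0 x0 L * aa x0 L u)
      with (PI * aa x0 L u / sigma0 x0 L - aa x0 L u) by (field; lra).
    reflexivity. }
  auto_derive; [repeat split; eexists; eassumption|].
  rewrite_Derive Ht. rewrite_Derive Ha.
  change (turning_angle s + - aa x0 L s) with (turning_angle s - aa x0 L s).
  rewrite cos_plus, cos_minus, cos_aa.
  unfold tangent_x, radius, beta. field. repeat split; lra.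
Qed.

Lemma is_derive_gamma_y : is_derive (gamma_y x0 L) s (tangent_y s).
Proof.
  pose proof is_derive_turning_angle as Ht. pose proof is_derive_aa as Ha.
  pose proof sigma0_bounds. pose proof PI_RGT_0. pose proof sqrt_arc_pos.
  pose proof beta_bounds. pose proof L_lt_kk.
  apply (is_derive_ext (fun u => (kk x0 L / 2) *
      (sigma0 x0 L / (PI + sigma0 x0 L) * cos (turning_angle u + aa x0 L u)
       + sigma0 x0 L / (PI - sigma0 x0 L) * cos (turning_angle u - aa x0 L u))
      + PI * x0 / (sigma0 x0 L * tan (sigma0 x0 L)))).
  { intros u. unfold gamma_y, turning_angle. cbv zeta.
    replace ((PI + sigma0 x0 L) / sigma0 x0 L * aa x0 L u)
      with (PI * aa x0 L u / sigma0 x0 L + aa x0 L u) by (field; lra).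
    replace ((PI - sigma0 x0 L) / sigma0 x0 L * aa x0 L u)
      with (PI * aa x0 L u / sigma0 x0 L - aa x0 L u) by (field; lra).
    reflexivity. }
  auto_derive; [repeat split; eexists; eassumption|].
  rewrite_Derive Ht. rewrite_Derive Ha.
  change (turning_angle s + - aa x0 L s) with (turning_angle s - aa x0 L s).
  rewrite sin_plus, sin_minus, cos_aa.
  unfold tangent_y, radius, beta. field. repeat split; lra.
Qed.

Lemma is_derive_radius : is_derive radius s (radius_ds s).
Proof.
  pose proof sqrt_arc_pos. pose proof L_lt_kk. unfold arc_domain in Hs.
  unfold radius, radius_ds. auto_derive; [nra|].
  replace (kk x0 L * (kk x0 L * 1) + - ((s + - L) * ((s + - L) * 1)))
    with (kk x0 L ^ 2 - (s - L) ^ 2) by ring.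
  field. lra.
Qed.

Lemma is_derive_radius_ds : is_derive radius_ds s ((- alpha - radius_ds s ^ 2) / radius s).
Proof.
  pose proof sqrt_arc_pos. pose proof L_lt_kk. pose proof beta_bounds. unfold arc_domain in Hs.
  unfold radius, radius_ds. rewrite <- beta_sqr. auto_derive;
    replace (kk x0 L * (kk x0 L * 1) + - ((s + - L) * ((s + - L) * 1)))
      with (kk x0 L ^ 2 - (s - L) ^ 2) by ring.
  - repeat split; [nra|lra].
  - field. lra.
Qed.

Lemma frenet_curve_frame : is_frenet_frame alpha curve_frame s.
Proof.
  unfold is_frenet_frame. cbn [curve_frame tx ty px py rad rad'].
  refine (conj _ (conj _ (conj _ (conj _ (conj _ (conj _ (conj _ _))))))).
  - apply is_derive_tangent_x.
  - apply is_derive_tangent_y.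
  - apply is_derive_gamma_x.
  - apply is_derive_gamma_y.
  - apply is_derive_radius.
  - apply is_derive_radius_ds.
  - pose proof radius_pos. lra.
  - apply tangent_norm.
Qed.

End OnArc.

(* [Reals] also exports a [d1] and a [d2], hence the qualification. *)
Lemma d2_gamma_x (s : R) : arc_domain s -> Defs.d2 (gamma_x x0 L) s = - tangent_y s / radius s.
Proof.
  intros Hs. unfold Defs.d2. rewrite (Derive_ext_loc _ tangent_x).
  - now apply is_derive_unique, is_derive_tangent_x.
  - apply (filter_imp arc_domain); [|now apply locally_open_interval].
    intros u Hu. now apply is_derive_unique, is_derive_gamma_x.
Qed.

Lemma d2_gamma_y (s : R) : arc_domain s -> Defs.d2 (gamma_y x0 L) s = tangent_x s / radius s.
Proof.
  intros Hs. unfold Defs.d2. rewrite (Derive_ext_loc _ tangent_y).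
  - now apply is_derive_unique, is_derive_tangent_y.
  - apply (filter_imp arc_domain); [|now apply locally_open_interval].
    intros u Hu. now apply is_derive_unique, is_derive_gamma_y.
Qed.

Lemma speed_curve (s : R) : arc_domain s -> speed (gamma_x x0 L) (gamma_y x0 L) s = 1.
Proof.
  intros Hs. unfold speed, Defs.d1.
  rewrite (is_derive_unique _ _ _ (is_derive_gamma_x s Hs)),
    (is_derive_unique _ _ _ (is_derive_gamma_y s Hs)), tangent_norm.
  apply sqrt_1.
Qed.

Lemma curvature_curve (s : R) : arc_domain s ->
  curvature (gamma_x x0 L) (gamma_y x0 L) s = 1 / radius s.
Proof.
  intros Hs. pose proof (radius_pos s Hs).
  unfold curvature. rewrite speed_curve, d2_gamma_x, d2_gamma_y by exact Hs. unfold Defs.d1.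
  rewrite (is_derive_unique _ _ _ (is_derive_gamma_x s Hs)),
    (is_derive_unique _ _ _ (is_derive_gamma_y s Hs)).
  transitivity ((tangent_x s ^ 2 + tangent_y s ^ 2) / radius s); [field; lra|].
  now rewrite tangent_norm.
Qed.

Lemma normal_curve (s : R) : arc_domain s ->
  normal_x (gamma_x x0 L) (gamma_y x0 L) s = tangent_y s /\
  normal_y (gamma_x x0 L) (gamma_y x0 L) s = - tangent_x s.
Proof.
  intros Hs. unfold normal_x, normal_y, Defs.d1. rewrite speed_curve by exact Hs.
  rewrite (is_derive_unique _ _ _ (is_derive_gamma_x s Hs)),
    (is_derive_unique _ _ _ (is_derive_gamma_y s Hs)).
  split; field.
Qed.

Lemma aa_endpoints : aa x0 L 0 = - sigma0 x0 L /\ aa x0 L (2 * L) = sigma0 x0 L.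
Proof.
  pose proof sigma0_bounds. pose proof PI_RGT_0. pose proof L_lt_kk.
  assert (Hsin : L / kk x0 L = sin (sigma0 x0 L)).
  { assert (0 < sin (sigma0 x0 L)) by (apply sin_gt_0; lra).
    unfold kk. field. lra. }
  unfold aa. split.
  - replace ((0 - L) / kk x0 L) with (- (L / kk x0 L)) by (field; lra).
    rewrite Hsin, asin_opp, asin_sin; lra.
  - replace ((2 * L - L) / kk x0 L) with (L / kk x0 L) by (field; lra).
    rewrite Hsin, asin_sin; lra.
Qed.

Lemma tangent_endpoints :
  tangent_x 0 = 1 /\ tangent_y 0 = 0 /\ tangent_x (2 * L) = 1 /\ tangent_y (2 * L) = 0.
Proof.
  pose proof sigma0_bounds. destruct aa_endpoints as [A0 A2].
  unfold tangent_x, tangent_y, turning_angle. rewrite A0, A2.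
  replace (PI * - sigma0 x0 L / sigma0 x0 L) with (- PI) by (field; lra).
  replace (PI * sigma0 x0 L / sigma0 x0 L) with PI by (field; lra).
  rewrite cos_neg, sin_neg, cos_PI, sin_PI. lra.
Qed.

Lemma lambda0_alpha : lambda0 x0 L = 2 - 2 * alpha.
Proof. unfold lambda0, alpha. field. lra. Qed.
End ExplicitCurve.

(** * The second variation *)

(* The [s]-jet at time [t]; note that [fx] and [fy] take [s] first. *)
Definition sjet (fx fy : R -> R -> R) (t s : R) : jet :=
  Jet (fx s t) (pds fx s t) (pds (pds fx) s t) (fy s t) (pds fy s t) (pds (pds fy) s t).

Section SmoothMap.
Variables fx fy : R -> R -> R.
Hypotheses (Hfx : smooth2 fx) (Hfy : smooth2 fy).

Lemma jet_derive_sjet (t s : R) :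
  jet_derive (fun z => sjet fx fy z s) t (sjet (pdt fx) (pdt fy) t s).
Proof.
  unfold jet_derive, sjet. cbn [jx jx' jx'' jy jy' jy''].
  rewrite <- (pdt_pds fx), <- (pdt_pds (pds fx)), <- (pdt_pds fy), <- (pdt_pds (pds fy))
    by auto with smooth.
  repeat split; apply smooth2_is_derive_t; auto with smooth.
Qed.

Lemma is_jet_sjet (t s : R) : is_jet (sjet fx fy t) s.
Proof.
  unfold is_jet, sjet. cbn [jx jx' jx'' jy jy' jy''].
  repeat split; try apply smooth2_is_derive_s; try apply smooth2_continuous_s; auto with smooth.
Qed.

Lemma continuity_2d_pt_cross_s (t s : R) :
  continuity_2d_pt (fun t s => cross_s (sjet fx fy t s)) t s.
Proof. unfold cross_s, sjet. cbn [jx jx' jx'' jy jy' jy'']. continuity_2d_expr. Qed.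
End SmoothMap.

Section SecondVariation.
Variables (x0 L : R) (Vx Vy : R -> R -> R) (T : R).
Hypotheses (Hx0 : 0 < 3 * x0) (HL : 3 * x0 < L)
  (Hadm : admissible_variation x0 L (gamma_x x0 L) (gamma_y x0 L) Vx Vy T).

Let mu := lambda0 x0 L / 2.
Let H := curvature (gamma_x x0 L) (gamma_y x0 L).
Let X := sjet (pdt Vx) (pdt Vy) 0.
Let X' := sjet (pdt (pdt Vx)) (pdt (pdt Vy)) 0.

Lemma T_pos : 0 < T.
Proof. apply Hadm. Qed.

Lemma smooth2_Vx : smooth2 Vx.
Proof. apply Hadm. Qed.

Lemma smooth2_Vy : smooth2 Vy.
Proof. apply Hadm. Qed.

#[local] Hint Resolve smooth2_Vx smooth2_Vy : smooth.

Lemma variation_initial (s : R) : 0 <= s <= 2 * L ->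
  Vx s 0 = gamma_x x0 L s /\ Vy s 0 = gamma_y x0 L s.
Proof. apply Hadm. Qed.

Lemma variation_admissible (t : R) : -T <= t <= T ->
  admissible_curve x0 L (fun s => Vx s t) (fun s => Vy s t).
Proof. apply Hadm. Qed.

Definition energy (t : R) : R :=
  funcF L (fun s => Vx s t) (fun s => Vy s t)
  - lambda0 x0 L * areaA L (fun s => Vx s t) (fun s => Vy s t).

Definition regular_strip (t s : R) : Prop :=
  -T < t < T /\ cross_s (sjet Vx Vy t s) <> 0.

Lemma cross_s_variation (t s : R) : -T <= t <= T -> 0 <= s <= 2 * L ->
  cross_s (sjet Vx Vy t s) <> 0.
Proof.
  intros Ht Hs Hc. destruct (variation_admissible t Ht) as (_ & _ & Hk & _).
  specialize (Hk s Hs). unfold curvature in Hk.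
  change (cross_s (sjet Vx Vy t s) / speed (fun s => Vx s t) (fun s => Vy s t) s ^ 3 > 0) in Hk.
  rewrite Hc in Hk. unfold Rdiv in Hk. rewrite Rmult_0_l in Hk. lra.
Qed.

Lemma regular_strip_open (t s : R) : regular_strip t s -> locally_2d regular_strip t s.
Proof.
  intros [Ht Hc]. apply locally_2d_and.
  - destruct (locally_open_interval (- T) T t Ht) as [d Hd].
    exists d. intros u v Hu _. now apply Hd.
  - apply continuity_2d_pt_neq_0; [apply continuity_2d_pt_cross_s|]; auto with smooth.
Qed.

Lemma regular_strip_contains (t s : R) : -T < t < T -> 0 <= s <= 2 * L -> regular_strip t s.
Proof. intros Ht Hs. split; [exact Ht|]. apply cross_s_variation; [lra|exact Hs]. Qed.

Lemma continuity_2d_pt_density (t s : R) : regular_strip t s ->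
  continuity_2d_pt (fun t s => density mu (sjet Vx Vy t s)) t s.
Proof.
  intros [_ Hc]. unfold density, cross_s, sjet in *. cbn [jx jx' jx'' jy jy' jy''] in *.
  continuity_2d_expr. exact Hc.
Qed.

Lemma continuity_2d_pt_density_dt (t s : R) : regular_strip t s ->
  continuity_2d_pt (fun t s => density_dt mu (sjet Vx Vy t s) (sjet (pdt Vx) (pdt Vy) t s)) t s.
Proof.
  intros [_ Hc]. unfold density_dt, cross_s, sjet in *. cbv zeta.
  cbn [jx jx' jx'' jy jy' jy''] in *.
  continuity_2d_expr; repeat apply pow_nonzero; exact Hc.
Qed.

Lemma continuity_2d_pt_density_dtt (t s : R) : regular_strip t s ->
  continuity_2d_pt (fun t s => density_dtt mu (sjet Vx Vy t s) (sjet (pdt Vx) (pdt Vy) t s)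
                                 (sjet (pdt (pdt Vx)) (pdt (pdt Vy)) t s)) t s.
Proof.
  intros [_ Hc]. unfold density_dtt, cross_s, sjet in *. cbv zeta.
  cbn [jx jx' jx'' jy jy' jy''] in *.
  continuity_2d_expr; repeat apply pow_nonzero; exact Hc.
Qed.

Lemma energy_RInt (t : R) : -T < t < T ->
  energy t = RInt (fun s => density mu (sjet Vx Vy t s)) 0 (2 * L).
Proof.
  intros Ht.
  assert (HA : ex_RInt (fun s => Vx s t * pds Vy s t - pds Vx s t * Vy s t) 0 (2 * L)).
  { apply (ex_RInt_continuity_2d_pt (fun t s => Vx s t * pds Vy s t - pds Vx s t * Vy s t));
      [lra|]. intros s _. continuity_2d_expr. }
  assert (HQ : ex_RInt (fun s => (pds Vx s t ^ 2 + pds Vy s t ^ 2) ^ 2 / cross_s (sjet Vx Vy t s))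
                 0 (2 * L)).
  { apply (ex_RInt_continuity_2d_pt
      (fun t s => (pds Vx s t ^ 2 + pds Vy s t ^ 2) ^ 2 / cross_s (sjet Vx Vy t s))); [lra|].
    intros s Hs. pose proof (cross_s_variation t s ltac:(lra) Hs).
    unfold cross_s, sjet in *. cbn [jx jx' jx'' jy jy' jy''] in *. continuity_2d_expr. assumption. }
  unfold energy, funcF, areaA, Defs.d1.
  change (fun s => Vx s t * Derive (fun u => Vy u t) s - Derive (fun u => Vx u t) s * Vy s t)
    with (fun s => Vx s t * pds Vy s t - pds Vx s t * Vy s t).
  rewrite (RInt_ext (fun s => speed _ _ s / curvature _ _ s)
    (fun s => (pds Vx s t ^ 2 + pds Vy s t ^ 2) ^ 2 / cross_s (sjet Vx Vy t s)))
    by (intros; apply speed_div_curvature).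
  unfold density. cbn [sjet jx jx' jx'' jy jy' jy''].
  rewrite (RInt_minus (V := R_CompleteNormedModule) _
    (fun s => mu * (Vx s t * pds Vy s t - pds Vx s t * Vy s t)));
    [|exact HQ|exact (ex_RInt_scal (V := R_CompleteNormedModule) _ _ _ mu HA)].
  rewrite (RInt_scal (V := R_CompleteNormedModule) _ _ _ mu) by exact HA.
  unfold minus, plus, opp, scal, mu; simpl; unfold mult; simpl. field.
Qed.

Lemma is_derive_energy (t : R) : -T < t < T ->
  is_derive energy t
    (RInt (fun s => density_dt mu (sjet Vx Vy t s) (sjet (pdt Vx) (pdt Vy) t s)) 0 (2 * L)).
Proof.
  intros Ht. pose proof T_pos.
  apply (is_derive_ext_loc (fun z => RInt (fun s => density mu (sjet Vx Vy z s)) 0 (2 * L))).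
  { apply (filter_imp (fun z => -T < z < T)); [|now apply locally_open_interval].
    intros z Hz. symmetry. now apply energy_RInt. }
  apply (is_derive_RInt_strip regular_strip (fun z s => density mu (sjet Vx Vy z s))
    (fun z s => density_dt mu (sjet Vx Vy z s) (sjet (pdt Vx) (pdt Vy) z s)) 0 (2 * L) T).
  - lra.
  - exact regular_strip_open.
  - exact regular_strip_contains.
  - intros z s [_ Hc].
    apply (is_derive_density mu (fun z => sjet Vx Vy z s)); [apply jet_derive_sjet|];
      auto with smooth.
  - exact continuity_2d_pt_density.
  - exact continuity_2d_pt_density_dt.
  - exact Ht.
Qed.

Lemma is_derive_Derive_energy :
  is_derive (Derive energy) 0
    (RInt (fun s => density_dtt mu (sjet Vx Vy 0 s) (X s)
                      (X' s)) 0 (2 * L)).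
Proof.
  pose proof T_pos.
  apply (is_derive_ext_loc (fun z => RInt (fun s => density_dt mu (sjet Vx Vy z s)
                                                    (sjet (pdt Vx) (pdt Vy) z s)) 0 (2 * L))).
  { apply (filter_imp (fun z => -T < z < T)); [|apply locally_open_interval; lra].
    intros z Hz. symmetry. now apply is_derive_unique, is_derive_energy. }
  apply (is_derive_RInt_strip regular_strip
    (fun z s => density_dt mu (sjet Vx Vy z s) (sjet (pdt Vx) (pdt Vy) z s))
    (fun z s => density_dtt mu (sjet Vx Vy z s) (sjet (pdt Vx) (pdt Vy) z s)
                  (sjet (pdt (pdt Vx)) (pdt (pdt Vy)) z s)) 0 (2 * L) T).
  - lra.
  - exact regular_strip_open.
  - exact regular_strip_contains.
  - intros z s [_ Hc].
    apply (is_derive_density_dt mu (fun z => sjet Vx Vy z s) (fun z => sjet (pdt Vx) (pdt Vy) z s));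
      try apply jet_derive_sjet; auto with smooth.
  - exact continuity_2d_pt_density_dt.
  - exact continuity_2d_pt_density_dtt.
  - lra.
Qed.

Lemma sjet_initial (s : R) : 0 < s < 2 * L -> sjet Vx Vy 0 s = frame_jet (curve_frame x0 L s).
Proof.
  intros Hs.
  assert (Hdom : forall u, 0 < u < 2 * L -> arc_domain x0 L u)
    by (intros; apply arc_domain_of_interval; auto; lra).
  assert (Hnear : forall u, 0 < u < 2 * L -> locally u (fun v => 0 < v < 2 * L))
    by (intros; now apply locally_open_interval).
  assert (Hinit : forall v, 0 < v < 2 * L -> Vx v 0 = gamma_x x0 L v /\ Vy v 0 = gamma_y x0 L v)
    by (intros; apply variation_initial; lra).
  assert (Htx : forall u, 0 < u < 2 * L -> pds Vx u 0 = tangent_x x0 L u).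
  { intros u Hu. unfold pds. rewrite (Derive_ext_loc _ (gamma_x x0 L)).
    - apply is_derive_unique, is_derive_gamma_x; auto.
    - apply (filter_imp _ _ (fun v Hv => proj1 (Hinit v Hv)) (Hnear u Hu)). }
  assert (Hty : forall u, 0 < u < 2 * L -> pds Vy u 0 = tangent_y x0 L u).
  { intros u Hu. unfold pds. rewrite (Derive_ext_loc _ (gamma_y x0 L)).
    - apply is_derive_unique, is_derive_gamma_y; auto.
    - apply (filter_imp _ _ (fun v Hv => proj2 (Hinit v Hv)) (Hnear u Hu)). }
  destruct (Hinit s Hs) as [Ex Ey].
  unfold sjet, frame_jet, curve_frame. cbn [tx ty px py rad rad'].
  rewrite Ex, Ey, Htx, Hty by exact Hs. f_equal.
  - unfold pds at 1. rewrite (Derive_ext_loc _ (tangent_x x0 L)).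
    + apply is_derive_unique, is_derive_tangent_x; auto.
    + apply (filter_imp _ _ Htx (Hnear s Hs)).
  - unfold pds at 1. rewrite (Derive_ext_loc _ (tangent_y x0 L)).
    + apply is_derive_unique, is_derive_tangent_y; auto.
    + apply (filter_imp _ _ Hty (Hnear s Hs)).
Qed.

Definition potential (s : R) : R :=
  boundary_potential (alpha x0 L) (curve_frame x0 L s)
    (X s) (X' s).

Lemma is_RInt_second_variation_defect :
  is_RInt (fun s => density_dtt (1 - alpha x0 L) (frame_jet (curve_frame x0 L s))
                      (X s) (X' s)
                    - stability_form (alpha x0 L) (curve_frame x0 L s) (X s))
    0 (2 * L) (potential (2 * L) - potential 0).
Proof.
  apply (is_RInt_derive (V := R_CompleteNormedModule) potential); intros s Hs;
    rewrite Rmin_left, Rmax_right in Hs by lra;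
    pose proof (frenet_curve_frame x0 L Hx0 HL s (arc_domain_of_interval x0 L Hx0 HL s Hs)).
  - apply is_derive_boundary_potential; auto; apply is_jet_sjet; auto with smooth.
  - apply continuous_second_variation_defect; auto; apply is_jet_sjet; auto with smooth.
Qed.

Definition phi (s : R) : R :=
  pdt Vx s 0 * normal_x (gamma_x x0 L) (gamma_y x0 L) s
  + pdt Vy s 0 * normal_y (gamma_x x0 L) (gamma_y x0 L) s.

Definition psi (s : R) : R :=
  pdt (pdt Vx) s 0 * normal_x (gamma_x x0 L) (gamma_y x0 L) s
  + pdt (pdt Vy) s 0 * normal_y (gamma_x x0 L) (gamma_y x0 L) s.

Lemma normal_part_curve (fx fy : R -> R -> R) (s : R) : arc_domain x0 L s ->
  fx s 0 * normal_x (gamma_x x0 L) (gamma_y x0 L) s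
  + fy s 0 * normal_y (gamma_x x0 L) (gamma_y x0 L) s
  = normal_part (curve_frame x0 L s) (sjet fx fy 0 s).
Proof.
  intros Hs. destruct (normal_curve x0 L Hx0 HL s Hs) as [-> ->].
  unfold normal_part. cbn. ring.
Qed.

Lemma Derive_normal_part_curve (fx fy : R -> R -> R) (s : R) :
  smooth2 fx -> smooth2 fy -> arc_domain x0 L s ->
  Derive (fun u => fx u 0 * normal_x (gamma_x x0 L) (gamma_y x0 L) u
                   + fy u 0 * normal_y (gamma_x x0 L) (gamma_y x0 L) u) s
  = normal_part_ds (curve_frame x0 L s) (sjet fx fy 0 s).
Proof.
  intros Hfx Hfy Hs.
  rewrite (Derive_ext_loc _ (fun u => normal_part (curve_frame x0 L u) (sjet fx fy 0 u))).
  - apply is_derive_unique, (is_derive_normal_part (alpha x0 L)).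
    + now apply frenet_curve_frame.
    + now apply is_jet_sjet.
  - apply (filter_imp (arc_domain x0 L)); [|now apply locally_open_interval].
    intros u Hu. now apply normal_part_curve.
Qed.

Lemma Derive_Derive_phi (s : R) : arc_domain x0 L s ->
  Derive (Derive phi) s = normal_part_dss (curve_frame x0 L s) (X s).
Proof.
  intros Hs. rewrite (Derive_ext_loc _ (fun u => normal_part_ds (curve_frame x0 L u) (X u))).
  - apply is_derive_unique, (is_derive_normal_part_ds (alpha x0 L)).
    + now apply frenet_curve_frame.
    + apply is_jet_sjet; auto with smooth.
  - apply (filter_imp (arc_domain x0 L)); [|now apply locally_open_interval].
    intros u Hu. apply Derive_normal_part_curve; auto with smooth.
Qed.

Lemma second_variation_integrand (s : R) : arc_domain x0 L s ->
  (2 - lambda0 x0 L) * H s * phi s ^ 2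
  - 2 * Derive phi s ^ 2 / H s
  + 2 * Derive (Derive phi) s ^ 2 / H s ^ 3
  = stability_form (alpha x0 L) (curve_frame x0 L s) (X s).
Proof.
  intros Hs. pose proof (radius_pos x0 L Hx0 HL s Hs).
  unfold H, phi. rewrite Derive_Derive_phi, Derive_normal_part_curve, normal_part_curve,
    curvature_curve, lambda0_alpha by auto with smooth.
  unfold X, stability_form. cbn [curve_frame rad]. field. lra.
Qed.

Lemma variation_endpoints (t : R) : -T <= t <= T ->
  Vx 0 t = x0 /\ Vy 0 t = 0 /\ Vx (2 * L) t = - x0 /\ Vy (2 * L) t = 0.
Proof.
  intros Ht. destruct (variation_admissible t Ht) as (_ & _ & _ & _ & ? & ? & ? & ? & _).
  auto.
Qed.

Lemma pdt_pdt_fixed (f : R -> R -> R) (a c : R) : (forall t, -T <= t <= T -> f a t = c) ->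
  pdt f a 0 = 0 /\ pdt (pdt f) a 0 = 0.
Proof.
  intros Hc. pose proof T_pos.
  assert (H1 : forall u, -T < u < T -> pdt f a u = 0).
  { intros u Hu. unfold pdt. rewrite (Derive_ext_loc _ (fun _ => c)); [apply Derive_const|].
    apply (filter_imp (fun t => -T < t < T)); [|now apply locally_open_interval].
    intros t Ht. apply Hc. lra. }
  split; [apply H1; lra|].
  unfold pdt at 1. rewrite (Derive_ext_loc _ (fun _ => 0)); [apply Derive_const|].
  apply (filter_imp (fun t => -T < t < T)); [exact H1|apply locally_open_interval; lra].
Qed.

(* Each curve lies above the axis and meets it at both ends. *)
Lemma pds_Vy_endpoints (u : R) : -T < u < T -> 0 <= pds Vy 0 u /\ pds Vy (2 * L) u <= 0.
Proof.
  intros Hu. destruct (variation_admissible u ltac:(lra)) as (_ & _ & _ & _ & _ & _ & _ & _ & Hpos).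
  destruct (variation_endpoints u ltac:(lra)) as (_ & H0 & _ & H2).
  split.
  - apply (is_derive_right_min (fun s => Vy s u) 0 _ (2 * L));
      [apply smooth2_is_derive_s; auto with smooth|lra|].
    intros h Hh. rewrite H0. apply Rlt_le, Hpos. lra.
  - apply (is_derive_left_min (fun s => Vy s u) (2 * L) _ (2 * L));
      [apply smooth2_is_derive_s; auto with smooth|lra|].
    intros h Hh. rewrite H2. apply Rlt_le, Hpos. lra.
Qed.

Lemma pds_Vy_endpoints_initial : pds Vy 0 0 = 0 /\ pds Vy (2 * L) 0 = 0.
Proof.
  destruct (tangent_endpoints x0 L Hx0 HL) as (_ & T0 & _ & T2).
  split.
  - transitivity (tangent_y x0 L 0); [|exact T0].
    apply (is_derive_right_unique (fun s => Vy s 0) (gamma_y x0 L) 0 _ _ (2 * L)).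
    + apply smooth2_is_derive_s; auto with smooth.
    + apply is_derive_gamma_y; auto. apply arc_domain_of_interval; auto; lra.
    + lra.
    + intros h Hh. apply variation_initial. lra.
  - transitivity (tangent_y x0 L (2 * L)); [|exact T2].
    apply (is_derive_left_unique (fun s => Vy s 0) (gamma_y x0 L) (2 * L) _ _ (2 * L)).
    + apply smooth2_is_derive_s; auto with smooth.
    + apply is_derive_gamma_y; auto. apply arc_domain_of_interval; auto; lra.
    + lra.
    + intros h Hh. apply variation_initial. lra.
Qed.

(* [t |-> pds Vy 0 t] is [>= 0] and vanishes at [t = 0]: a minimum. *)
Lemma second_variation_slope_0 : pds (pdt Vy) 0 0 = 0 /\ 0 <= pds (pdt (pdt Vy)) 0 0.
Proof.
  pose proof T_pos.
  rewrite <- (pdt_pds Vy), <- (pdt_pds (pdt Vy)), <- (pdt_pds Vy) by auto with smooth.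
  apply (is_derive2_local_min (fun u => pds Vy 0 u) (fun u => pdt (pds Vy) 0 u) _ T); auto.
  - intros u _. apply smooth2_is_derive_t. auto with smooth.
  - apply smooth2_is_derive_t. auto with smooth.
  - intros u Hu. apply pds_Vy_endpoints, Hu.
  - apply pds_Vy_endpoints_initial.
Qed.

Lemma second_variation_slope_2L :
  pds (pdt Vy) (2 * L) 0 = 0 /\ pds (pdt (pdt Vy)) (2 * L) 0 <= 0.
Proof.
  pose proof T_pos.
  rewrite <- (pdt_pds Vy), <- (pdt_pds (pdt Vy)), <- (pdt_pds Vy) by auto with smooth.
  destruct (is_derive2_local_min (fun u => - pds Vy (2 * L) u) (fun u => - pdt (pds Vy) (2 * L) u)
              (- pdt (pdt (pds Vy)) (2 * L) 0) T); auto.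
  - intros u _. apply (is_derive_Ropp (fun u => pds Vy (2 * L) u)), smooth2_is_derive_t.
    auto with smooth.
  - apply (is_derive_Ropp (fun u => pdt (pds Vy) (2 * L) u)), smooth2_is_derive_t. auto with smooth.
  - intros u Hu. pose proof (pds_Vy_endpoints u Hu). lra.
  - rewrite (proj2 pds_Vy_endpoints_initial). ring.
  - split; lra.
Qed.

Lemma endpoint_values (a : R) : a = 0 \/ a = 2 * L ->
  tangent_x x0 L a = 1 /\ tangent_y x0 L a = 0 /\
  pdt Vx a 0 = 0 /\ pdt Vy a 0 = 0 /\ pdt (pdt Vx) a 0 = 0 /\ pdt (pdt Vy) a 0 = 0 /\
  pds (pdt Vy) a 0 = 0.
Proof.
  destruct (tangent_endpoints x0 L Hx0 HL) as (Tx0 & Ty0 & Tx2 & Ty2).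
  pose proof variation_endpoints as E.
  intros [-> | ->].
  - destruct (pdt_pdt_fixed Vx 0 x0 (fun t Ht => proj1 (E t Ht))).
    destruct (pdt_pdt_fixed Vy 0 0 (fun t Ht => proj1 (proj2 (E t Ht)))).
    now repeat split; try apply second_variation_slope_0.
  - destruct (pdt_pdt_fixed Vx (2 * L) (- x0) (fun t Ht => proj1 (proj2 (proj2 (E t Ht))))).
    destruct (pdt_pdt_fixed Vy (2 * L) 0 (fun t Ht => proj2 (proj2 (proj2 (E t Ht))))).
    now repeat split; try apply second_variation_slope_2L.
Qed.

Lemma potential_endpoint (a : R) : a = 0 \/ a = 2 * L ->
  potential a = - radius x0 L a ^ 2 * pds (pdt (pdt Vy)) a 0.
Proof.
  intros Ha. destruct (endpoint_values a Ha) as (Tx & Ty & X1 & X2 & Y1 & Y2 & X2s).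
  unfold potential, X, X', boundary_potential, curve_frame, sjet. cbv zeta.
  cbn [tx ty px py rad rad' jx jx' jx'' jy jy' jy''].
  rewrite Tx, Ty, X1, X2, Y1, Y2, X2s. ring.
Qed.

Lemma Derive_psi_endpoint (a : R) : a = 0 \/ a = 2 * L -> Derive psi a = - pds (pdt (pdt Vy)) a 0.
Proof.
  intros Ha. destruct (endpoint_values a Ha) as (Tx & Ty & _ & _ & Y1 & Y2 & _).
  assert (Hdom : arc_domain x0 L a) by (apply arc_domain_of_interval; auto; destruct Ha; lra).
  pose proof (radius_pos x0 L Hx0 HL a Hdom).
  unfold psi. rewrite Derive_normal_part_curve by auto with smooth.
  unfold normal_part_ds, curve_frame, sjet. cbn [tx ty px py rad rad' jx jx' jx'' jy jy' jy''].
  rewrite Tx, Ty, Y1, Y2. field. lra.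
Qed.

Lemma boundary_term_potential :
  Derive psi (2 * L) / H (2 * L) ^ 2
  - Derive psi 0 / H 0 ^ 2
  = potential (2 * L) - potential 0.
Proof.
  assert (H0 : arc_domain x0 L 0) by (apply arc_domain_of_interval; auto; lra).
  assert (H2 : arc_domain x0 L (2 * L)) by (apply arc_domain_of_interval; auto; lra).
  pose proof (radius_pos x0 L Hx0 HL 0 H0). pose proof (radius_pos x0 L Hx0 HL (2 * L) H2).
  unfold H. rewrite !Derive_psi_endpoint, !potential_endpoint, !curvature_curve by auto.
  field. lra.
Qed.

Lemma potential_endpoints_sign : potential 0 <= 0 <= potential (2 * L).
Proof.
  rewrite !potential_endpoint by auto.
  pose proof (proj2 second_variation_slope_0). pose proof (proj2 second_variation_slope_2L).
  pose proof (pow2_ge_0 (radius x0 L 0)). pose proof (pow2_ge_0 (radius x0 L (2 * L))).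
  split; nra.
Qed.

Lemma RInt_second_derivative :
  RInt (fun s => density_dtt mu (sjet Vx Vy 0 s) (X s)
                   (X' s)) 0 (2 * L)
  = RInt (fun s => (2 - lambda0 x0 L) * H s * phi s ^ 2
                   - 2 * Derive phi s ^ 2 / H s
                   + 2 * Derive (Derive phi) s ^ 2 / H s ^ 3)
      0 (2 * L)
    + (potential (2 * L) - potential 0).
Proof.
  set (dtt := fun s => density_dtt mu (sjet Vx Vy 0 s) (X s)
                         (X' s)).
  set (stab := fun s => stability_form (alpha x0 L) (curve_frame x0 L s) (X s)).
  set (defect := fun s => density_dtt (1 - alpha x0 L) (frame_jet (curve_frame x0 L s))
                   (X s) (X' s) - stab s).
  assert (Hsplit : forall s, 0 < s < 2 * L -> dtt s = stab s + defect s).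
  { intros s Hs. unfold dtt, defect. rewrite sjet_initial by exact Hs.
    replace mu with (1 - alpha x0 L) by (unfold mu; rewrite lambda0_alpha by auto; field). ring. }
  assert (Hdefect : is_RInt defect 0 (2 * L) (potential (2 * L) - potential 0))
    by exact is_RInt_second_variation_defect.
  assert (Hdtt : ex_RInt dtt 0 (2 * L)).
  { apply (ex_RInt_continuity_2d_pt (fun t s => density_dtt mu (sjet Vx Vy t s)
      (sjet (pdt Vx) (pdt Vy) t s) (sjet (pdt (pdt Vx)) (pdt (pdt Vy)) t s))); [lra|].
    intros s Hs. pose proof T_pos.
    apply continuity_2d_pt_density_dtt, regular_strip_contains; [lra|exact Hs]. }
  assert (Hstab : ex_RInt stab 0 (2 * L)).
  { apply (ex_RInt_ext (fun s => dtt s - defect s)).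
    - intros s Hs. rewrite Rmin_left, Rmax_right in Hs by lra. rewrite Hsplit by exact Hs.
      apply Rplus_minus_r.
    - apply (ex_RInt_minus (V := R_CompleteNormedModule)); [exact Hdtt|].
      now exists (potential (2 * L) - potential 0). }
  rewrite (RInt_ext dtt (fun s => stab s + defect s))
    by (intros s Hs; rewrite Rmin_left, Rmax_right in Hs by lra; now apply Hsplit).
  rewrite (RInt_plus (V := R_CompleteNormedModule))
    by (auto; now exists (potential (2 * L) - potential 0)).
  rewrite (is_RInt_unique _ _ _ _ Hdefect). unfold plus; simpl. f_equal. symmetry. apply RInt_ext.
  intros s Hs. rewrite Rmin_left, Rmax_right in Hs by lra.
  apply second_variation_integrand, arc_domain_of_interval; auto; lra.
Qed.
End SecondVariation.

Theorem mainTheorem12 (x0 L : R) (Vx Vy : R -> R -> R) (T : R) :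
  0 < 3 * x0 -> 3 * x0 < L ->
  admissible_variation x0 L (gamma_x x0 L) (gamma_y x0 L) Vx Vy T ->
  let gx := gamma_x x0 L in
  let gy := gamma_y x0 L in
  let lam := lambda0 x0 L in
  let H := curvature gx gy in
  (* X = d/dt V |_{t=0},  X' = d^2/dt^2 V |_{t=0} *)
  let Xx := fun s => pdt Vx s 0 in
  let Xy := fun s => pdt Vy s 0 in
  let X'x := fun s => pdt (pdt Vx) s 0 in
  let X'y := fun s => pdt (pdt Vy) s 0 in
  (* normal components: phi = <X, N>, psi = <X', N> *)
  let phi := fun s => Xx s * normal_x gx gy s + Xy s * normal_y gx gy s in
  let psi := fun s => X'x s * normal_x gx gy s + X'y s * normal_y gx gy s in
  let E := fun t => funcF L (fun s => Vx s t) (fun s => Vy s t)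
                    - lam * areaA L (fun s => Vx s t) (fun s => Vy s t) in
  let I := RInt (fun s => (2 - lam) * H s * phi s ^ 2
                          - 2 * (Derive phi s) ^ 2 / H s
                          + 2 * (Derive (Derive phi) s) ^ 2 / H s ^ 3)
                0 (2 * L) in
  let boundary := Derive psi (2 * L) / H (2 * L) ^ 2 - Derive psi 0 / H 0 ^ 2 in
  (forall t, -T < t < T -> ex_derive E t) /\
  is_derive (Derive E) 0 (I + boundary) /\
  I <= I + boundary.
Proof.
  intros Hx0 HL Hadm gx gy lam H Xx Xy X'x X'y phi psi E I boundary.
  assert (Hboundary : boundary = potential x0 L Vx Vy (2 * L) - potential x0 L Vx Vy 0)
    by exact (boundary_term_potential x0 L Vx Vy T Hx0 HL Hadm).
  split; [|split].
  - intros t Ht. eexists. exact (is_derive_energy x0 L Vx Vy T Hx0 HL Hadm t Ht).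
  - eapply is_derive_eq; [exact (is_derive_Derive_energy x0 L Vx Vy T Hx0 HL Hadm)|].
    rewrite Hboundary. exact (RInt_second_derivative x0 L Vx Vy T Hx0 HL Hadm).
  - pose proof (potential_endpoints_sign x0 L Vx Vy T Hx0 HL Hadm). lra.
Qed.
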